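(* Let $G$ be a non-abelian subgroup of $\mathcal{H}(n,\mathbb{C})$ with $\Lambda_G\not\subset\mathbb{R}$ and $G\not\subset\mathcal{SR}_n$, and let $U=\mathbb{C}^n\setminus E_G$. The following are equivalent: (1) $G$ has a dense orbit in $\mathbb{C}^n$; (2) every orbit $G(z)$ with $z\in U$ is dense in $\mathbb{C}^n$; (3) either $E_G=\mathbb{C}^n$, or $\dim_{\mathbb{C}}E_G=n-1$ and $\overline{\Lambda_G}=\mathbb{C}$.
   Context: $\mathcal{H}(n,\mathbb{C})$ is the group of all maps $z\mapsto\lambda z+b$ of $\mathbb{C}^n$ with $\lambda\in\mathbb{C}^*$, $b\in\mathbb{C}^n$ ($\lambda$ = ratio); $\mathcal{T}_n$ = translations; every element of $\mathcal{H}(n,\mathbb{C})\setminus\mathcal{T}_n$ has a unique fixed point, its center. $H_2=(\frac{\pi}{2}+\pi\mathbb{Z})\cup\pi\mathbb{Z}$, $F_2=\{e^{ix}:x\in H_2\}$, $H_3=(\frac{\pi}{3}+\pi\mathbb{Z})\cup(-\frac{\pi}{3}+\pi\mathbb{Z})\cup\pi\mathbb{Z}$, $F_3=\{e^{ix}:x\in H_3\}$; $\mathcal{S}_i\mathcal{R}_n=\{z\mapsto\lambda z+b:\lambda\in F_i, b\in\mathbb{C}^n\}$, $\mathcal{SR}_n=\mathcal{S}_2\mathcal{R}_n\cup\mathcal{S}_3\mathcal{R}_n$. For a subgroup $G$: $G(z)$ is the orbit; $\Lambda_G$ the set of ratios of elements of $G$, $\overline{\Lambda_G}$ its closure in $\mathbb{C}$;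 $\Gamma_G$ the set of centers of elements of $G\setminus\mathcal{T}_n$; $E_G$ the smallest complex affine subspace of $\mathbb{C}^n$ containing $\Gamma_G$. *)

From Stdlib Require Import Reals ZArith.
Open Scope R_scope.

Definition C := (R * R)%type.
Definition C0 : C := (0, 0).
Definition C1 : C := (1, 0).
Definition Cadd (z w : C) : C := (fst z + fst w, snd z + snd w).
Definition Copp (z : C) : C := (- fst z, - snd z).
Definition Csub (z w : C) : C := Cadd z (Copp w).
Definition Cmul (z w : C) : C :=
  (fst z * fst w - snd z * snd w, fst z * snd w + snd z * fst w).
Definition Cinv (z : C) : C :=
  (fst z / (fst z ^ 2 + snd z ^ 2), - snd z / (fst z ^ 2 + snd z ^ 2)).
Definition Cnorm (z : C) : R := sqrt (fst z ^ 2 + snd z ^ 2).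
Definition Cexpi (x : R) : C := (cos x, sin x).

Definition idx (n : nat) := {i : nat | (i < n)%nat}.
Definition vec (n : nat) := idx n -> C.
Definition vzero {n} : vec n := fun _ => C0.
Definition vadd {n} (z w : vec n) : vec n := fun i => Cadd (z i) (w i).
Definition vscale {n} (a : C) (z : vec n) : vec n := fun i => Cmul a (z i).
Fixpoint vlin {n} (k : nat) (c : nat -> C) (v : nat -> vec n) : vec n :=
  match k with
  | O => vzero
  | S k' => vadd (vlin k' c v) (vscale (c k') (v k'))
  end.

(** Elements of H(n,C): z |-> lambda z + b, encoded by (lambda, b). *)
Record aff (n : nat) := mkaff { ratio : C; trans : vec n }.
Arguments mkaff {n}. Arguments ratio {n}. Arguments trans {n}.
Definition apply {n} (f : aff n) (z : vec n) : vec n :=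
  vadd (vscale (ratio f) z) (trans f).
Definition acomp {n} (f g : aff n) : aff n :=
  mkaff (Cmul (ratio f) (ratio g)) (vadd (vscale (ratio f) (trans g)) (trans f)).
Definition ainv {n} (f : aff n) : aff n :=
  mkaff (Cinv (ratio f)) (vscale (Copp (Cinv (ratio f))) (trans f)).
Definition aid {n} : aff n := mkaff C1 vzero.

Definition is_subgroup {n} (G : aff n -> Prop) : Prop :=
  (forall f, G f -> ratio f <> C0) /\ G aid /\
  (forall f g, G f -> G g -> G (acomp f g)) /\
  (forall f, G f -> G (ainv f)).

Definition nonabelian {n} (G : aff n -> Prop) : Prop :=
  exists f g, G f /\ G g /\ acomp f g <> acomp g f.

Definition Lambda {n} (G : aff n -> Prop) (l : C) : Prop :=
  exists f, G f /\ ratio f = l.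
Definition Lambda_subset_R {n} (G : aff n -> Prop) : Prop :=
  forall l, Lambda G l -> snd l = 0.
Definition closure_Lambda_is_C {n} (G : aff n -> Prop) : Prop :=
  forall w : C, forall eps, eps > 0 ->
    exists l, Lambda G l /\ Cnorm (Csub l w) < eps.

Definition H2 (x : R) : Prop :=
  exists k : Z, x = PI / 2 + PI * IZR k \/ x = PI * IZR k.
Definition F2 (l : C) : Prop := exists x, H2 x /\ l = Cexpi x.
Definition H3 (x : R) : Prop :=
  exists k : Z, x = PI / 3 + PI * IZR k \/ x = - (PI / 3) + PI * IZR k
               \/ x = PI * IZR k.
Definition F3 (l : C) : Prop := exists x, H3 x /\ l = Cexpi x.
Definition in_SR {n} (f : aff n) : Prop := F2 (ratio f) \/ F3 (ratio f).
Definition subset_SR {n} (G : aff n -> Prop) : Prop :=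
  forall f, G f -> in_SR f.

Definition Gamma {n} (G : aff n -> Prop) (c : vec n) : Prop :=
  exists f, G f /\ ratio f <> C1 /\ apply f c = c.

Definition is_affine_subspace {n} (A : vec n -> Prop) : Prop :=
  forall x y t, A x -> A y ->
    A (vadd (vscale (Csub C1 t) x) (vscale t y)).
Definition E_G {n} (G : aff n -> Prop) (z : vec n) : Prop :=
  forall A : vec n -> Prop, is_affine_subspace A ->
    (forall c, Gamma G c -> A c) -> A z.

Definition lin_indep {n} (k : nat) (v : nat -> vec n) : Prop :=
  forall c : nat -> C, vlin k c v = vzero -> forall i, (i < k)%nat -> c i = C0.
Definition affine_dim {n} (E : vec n -> Prop) (k : nat) : Prop :=
  exists (p0 : vec n) (v : nat -> vec n), lin_indep k v /\
    forall z, E z <-> exists c : nat -> C, z = vadd p0 (vlin k c v).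

Definition dense_orbit {n} (G : aff n -> Prop) (z : vec n) : Prop :=
  forall (w : vec n) eps, eps > 0 ->
    exists f, G f /\ forall i, Cnorm (Csub (apply f z i) (w i)) < eps.
Definition has_dense_orbit {n} (G : aff n -> Prop) : Prop :=
  exists z, dense_orbit G z.

(* Let T be the group of translation vectors of G and M = {r | r T <= T} its
   multiplier ring; conjugation shows that M is a subring of C containing every
   ratio. Since some ratio is not real and some ratio lies outside F2 u F3, M
   also contains a nonzero element of modulus < 1, so M is dense in C and T is
   dense in its complex span. The commutator of two non-translations with centers
   c0 and c is a translation by a nonzero multiple of c - c0, so E_G - c0 lies in
   that span; hence if E_G = C^n the orbit of c0 is dense.
   Modulo the direction of E_G every f in G acts as multiplication by its ratio:
   a linear form L vanishing on E_G - c0 satisfies L (f z - c0) = ratio f * L (z - c0).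
   A dense orbit therefore forces L (z - c0) <> 0 for every such L, so E_G has
   codimension at most one, and makes the ratios dense in C. Conversely, in
   codimension one with dense ratios, a ratio approximates the coordinate of the
   target transverse to E_G and a translation corrects the error inside E_G. *)

From Pilot Require Import Defs.
From Stdlib Require Import Reals ZArith Lra Lia Classical FunctionalExtensionality ProofIrrelevance.
(* Re-import so that [C] is [Defs.C] rather than [Binomial.C]. *)
Import Pilot.Defs.
Open Scope R_scope.

Lemma C_ext (z w : C) : fst z = fst w -> snd z = snd w -> z = w.
Proof. destruct z, w; simpl; intros -> ->; reflexivity. Qed.

Definition vsub {n} (x y : vec n) : vec n := vadd x (vscale (Copp C1) y).

Ltac C_parts := apply C_ext; unfold Csub, Cadd, Copp, Cmul, Cinv, C0, C1; simpl.
Ltac vec_parts := apply functional_extensionality; intro;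
  unfold apply, vsub, vadd, vscale, vzero; simpl; C_parts.
Ltac nonzero_by_ring := match goal with H : ?a <> 0 |- ?b <> 0 =>
  let Hb := fresh in intro Hb; apply H; transitivity b;
  [unfold Csub, Cadd, Copp, Cmul, Cinv, C0, C1; simpl; ring | exact Hb] end.
Ltac C_field := C_parts; field; try nonzero_by_ring.

Definition Cnorm2 (z : C) : R := fst z ^ 2 + snd z ^ 2.
(* The l1 norm is easier to bound than [Cnorm]; the two are equivalent. *)
Definition Cnorm1 (z : C) : R := Rabs (fst z) + Rabs (snd z).

Lemma Cnorm2_gt0 z : z <> C0 -> 0 < Cnorm2 z.
Proof.
  destruct z as [a b]; unfold Cnorm2, C0; simpl; intro H.
  destruct (Req_dec a 0), (Req_dec b 0); subst; [tauto| nra..].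
Qed.
Lemma Cnorm2_neq0 z : z <> C0 -> fst z ^ 2 + snd z ^ 2 <> 0.
Proof. intro H; pose proof (Cnorm2_gt0 z H); unfold Cnorm2 in *; lra. Qed.
Lemma Cnorm2_mul z w : Cnorm2 (Cmul z w) = Cnorm2 z * Cnorm2 w.
Proof. unfold Cnorm2, Cmul; simpl; ring. Qed.
Lemma Cnorm2_inv z : z <> C0 -> Cnorm2 (Cinv z) = / Cnorm2 z.
Proof. intro H; pose proof (Cnorm2_neq0 z H); unfold Cnorm2, Cinv; simpl; field; contradict H0; nra. Qed.

Lemma Cmul_neq0 z w : z <> C0 -> w <> C0 -> Cmul z w <> C0.
Proof.
  intros Hz Hw H; pose proof (Cnorm2_gt0 z Hz); pose proof (Cnorm2_gt0 w Hw).
  assert (Cnorm2 (Cmul z w) = 0) by (rewrite H; unfold Cnorm2, C0; simpl; ring).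
  rewrite Cnorm2_mul in H2; nra.
Qed.
Lemma Csub_neq0 a b : a <> b -> Csub a b <> C0.
Proof.
  intros H h; apply H; unfold Csub, Cadd, Copp, C0 in h; injection h; intros.
  apply C_ext; lra.
Qed.
Lemma Cmul_inv_l z : z <> C0 -> Cmul (Cinv z) z = C1.
Proof. intro H; pose proof (Cnorm2_neq0 z H); C_field. Qed.

Lemma Cnorm1_ge0 z : 0 <= Cnorm1 z.
Proof. unfold Cnorm1; pose proof (Rabs_pos (fst z)); pose proof (Rabs_pos (snd z)); lra. Qed.
Lemma Cnorm1_add z w : Cnorm1 (Cadd z w) <= Cnorm1 z + Cnorm1 w.
Proof.
  unfold Cnorm1, Cadd; simpl.
  pose proof (Rabs_triang (fst z) (fst w)); pose proof (Rabs_triang (snd z) (snd w)); lra.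
Qed.
Lemma Cnorm1_mul z w : Cnorm1 (Cmul z w) <= Cnorm1 z * Cnorm1 w.
Proof.
  unfold Cnorm1, Cmul; simpl.
  pose proof (Rabs_triang (fst z * fst w) (- (snd z * snd w))).
  pose proof (Rabs_triang (fst z * snd w) (snd z * fst w)).
  rewrite Rabs_Ropp in H; rewrite !Rabs_mult in H, H0; unfold Rminus; nra.
Qed.
Lemma Cnorm1_real a : Cnorm1 (a, 0) = Rabs a.
Proof. unfold Cnorm1; simpl; rewrite Rabs_R0; ring. Qed.
Lemma Cnorm1_sqr z : Cnorm1 z ^ 2 <= 2 * Cnorm2 z.
Proof.
  unfold Cnorm1, Cnorm2; rewrite <- (pow2_abs (fst z)), <- (pow2_abs (snd z)).
  pose proof (pow2_ge_0 (Rabs (fst z) - Rabs (snd z))); nra.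
Qed.

Lemma Cnorm_le_Cnorm1 z : Cnorm z <= Cnorm1 z.
Proof.
  unfold Cnorm, Cnorm1; destruct z as [a b]; cbn [fst snd].
  pose proof (Rabs_pos a); pose proof (Rabs_pos b).
  rewrite <- (sqrt_Rsqr (Rabs a + Rabs b)) by lra; apply sqrt_le_1_alt.
  rewrite <- (pow2_abs a), <- (pow2_abs b); unfold Rsqr; nra.
Qed.
Lemma Cnorm1_le_Cnorm z : Cnorm1 z <= 2 * Cnorm z.
Proof.
  assert (Habs : forall a b, Rabs a <= sqrt (a ^ 2 + b ^ 2)).
  { intros a b; rewrite <- sqrt_Rsqr_abs; apply sqrt_le_1_alt; unfold Rsqr; nra. }
  unfold Cnorm1, Cnorm; pose proof (Habs (fst z) (snd z)); pose proof (Habs (snd z) (fst z)).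
  rewrite Rplus_comm in H0; lra.
Qed.
Lemma Cnorm_mul z w : Cnorm (Cmul z w) = Cnorm z * Cnorm w.
Proof. unfold Cnorm; rewrite <- sqrt_mult by nra; f_equal; unfold Cmul; simpl; ring. Qed.
Lemma Cnorm_gt0 z : z <> C0 -> 0 < Cnorm z.
Proof. intro H; apply sqrt_lt_R0; exact (Cnorm2_gt0 z H). Qed.

Lemma finite_upper_bound (f : nat -> R) m : exists K, forall j, (j < m)%nat -> f j <= K.
Proof.
  induction m as [|m [K HK]]; [exists 0; lia |].
  exists (Rmax K (f m)); intros j hj; destruct (Nat.eq_dec j m) as [-> | ne].
  - apply Rmax_r.
  - eapply Rle_trans; [apply HK; lia | apply Rmax_l].
Qed.

Lemma vec_bounded {n} (x : vec n) : exists K, 0 < K /\ forall i, Cnorm1 (x i) <= K.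
Proof.
  destruct (finite_upper_bound (fun j =>
    match lt_dec j n with left h => Cnorm1 (x (exist _ j h)) | right _ => 0 end) n) as [K HK].
  exists (Rmax 1 K); split; [apply Rlt_le_trans with 1; [lra | apply Rmax_l] |].
  intros [j hj]; eapply Rle_trans; [| apply Rmax_r].
  specialize (HK j hj); simpl in HK; destruct (lt_dec j n) as [h |]; [| lia].
  rewrite (proof_irrelevance _ hj h); exact HK.
Qed.

Definition linear_subspace {n} (D : vec n -> Prop) : Prop :=
  D vzero /\ (forall x y, D x -> D y -> D (vadd x y)) /\ (forall a x, D x -> D (vscale a x)).
Definition linear_form {n} (L : vec n -> C) : Prop :=
  (forall x y, L (vadd x y) = Cadd (L x) (L y)) /\ (forall a x, L (vscale a x) = Cmul a (L x)).
Definition bounded_form {n} (L : vec n -> C) (K : R) : Prop :=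
  0 <= K /\ forall w e, (forall i, Cnorm1 (w i) <= e) -> Cnorm1 (L w) <= K * e.

Lemma linear_form_sub {n} (L : vec n -> C) x y : linear_form L -> L (vsub x y) = Csub (L x) (L y).
Proof. intros [Ladd Lscale]; unfold vsub; rewrite Ladd, Lscale; C_parts; ring. Qed.

Lemma vsub_eq {n} (x y : vec n) i : vsub x y i = Csub (x i) (y i).
Proof. unfold vsub, vadd, vscale; C_parts; ring. Qed.
Lemma vadd_vsub {n} (x y : vec n) : vadd x (vsub y x) = y.
Proof. vec_parts; ring. Qed.

Lemma apply_acomp {n} (f g : aff n) y : apply (acomp f g) y = apply f (apply g y).
Proof. vec_parts; ring. Qed.
Lemma apply_ainvK {n} (f : aff n) y : ratio f <> C0 -> apply (ainv f) (apply f y) = y.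
Proof. intro H; pose proof (Cnorm2_neq0 _ H); vec_parts; field; nonzero_by_ring. Qed.

Lemma trans_of_fixed_point {n} (h : aff n) c i :
  apply h c = c -> trans h i = Csub (c i) (Cmul (ratio h) (c i)).
Proof.
  intro h_c; pose proof (f_equal (fun v => v i) h_c) as e; unfold apply, vadd, vscale in e.
  pose proof (f_equal fst e); pose proof (f_equal snd e); C_parts; simpl in *; lra.
Qed.

Lemma bounded_form_near {n} (L : vec n -> C) K (a w : vec n) d : bounded_form L K ->
  (forall i, Cnorm (Csub (a i) (w i)) < d) -> Cnorm1 (L (vsub a w)) <= K * (2 * d).
Proof.
  intros [_ L_bdd] near; apply L_bdd; intro i; rewrite vsub_eq.
  pose proof (Cnorm1_le_Cnorm (Csub (a i) (w i))); specialize (near i); lra.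
Qed.

Lemma linear_subspace_vlin {n} {D : vec n -> Prop} {k c v} : linear_subspace D ->
  (forall j, (j < k)%nat -> D (v j)) -> D (vlin k c v).
Proof.
  intros [D0 [Dadd Dscale]] Dv; induction k as [|k IH]; simpl; auto.
  apply Dadd; [apply IH; intros j hj | apply Dscale]; apply Dv; lia.
Qed.

Lemma linear_form_vlin {n} {L : vec n -> C} {k c v} : linear_form L ->
  (forall j, (j < k)%nat -> L (v j) = C0) -> L (vlin k c v) = C0.
Proof.
  intros [Ladd Lscale] Lv; induction k as [|k IH]; simpl.
  - replace (@vzero n) with (vscale C0 (@vzero n)) by (vec_parts; ring).
    rewrite Lscale; C_parts; ring.
  - rewrite Ladd, Lscale, IH, Lv by (intros; try apply Lv; lia); C_parts; ring.
Qed.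

Lemma vlin0 {n} k (v : nat -> vec n) : vlin k (fun _ => C0) v = vzero.
Proof. induction k as [|k IH]; simpl; [| rewrite IH]; vec_parts; ring. Qed.

Lemma F2_or_F3_of_integral_trace c s k :
  c ^ 2 + s ^ 2 = 1 -> 2 * c = IZR k -> F2 (c, s) \/ F3 (c, s).
Proof.
  intros unit trace.
  assert (k_range : (-2 <= k <= 2)%Z) by (split; apply le_IZR; rewrite <- trace; nra).
  assert (sqrt3 : (sqrt 3 / 2) ^ 2 = 3 / 4).
  { replace ((sqrt 3 / 2) ^ 2) with (sqrt 3 * sqrt 3 / 4) by field; rewrite sqrt_sqrt; lra. }
  assert (sqrt3_ge0 : 0 <= sqrt 3 / 2) by (pose proof (sqrt_pos 3); lra).
  assert (sin_cases : forall a, s ^ 2 = a ^ 2 -> s = a \/ s = - a).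
  { intros a h; assert ((s - a) * (s + a) = 0) by nra.
    destruct (Rmult_integral _ _ H); [left | right]; lra. }
  assert (shift : forall x m, (m = -1 \/ m = 1)%Z ->
    cos (x + PI * IZR m) = - cos x /\ sin (x + PI * IZR m) = - sin x).
  { intros x m [-> | ->]; simpl.
    - pose proof (neg_cos (x + PI * -1)); pose proof (neg_sin (x + PI * -1)).
      replace (x + PI * -1 + PI) with x in * by ring; lra.
    - replace (x + PI * 1) with (x + PI) by ring; split; [apply neg_cos | apply neg_sin]. }
  assert (k = -2 \/ k = -1 \/ k = 0 \/ k = 1 \/ k = 2)%Z as [-> | [-> | [-> | [-> | ->]]]] by lia;
    simpl in trace.
  - left; exists PI; split; [exists 1%Z; right; simpl; ring |].
    apply C_ext; simpl; rewrite ?cos_PI, ?sin_PI; nra.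
  - right; destruct (sin_cases (sqrt 3 / 2)) as [-> | ->]; [nra | |].
    + exists (- (PI / 3) + PI * IZR 1); split; [exists 1%Z; tauto |].
      unfold Cexpi; destruct (shift (- (PI / 3)) 1%Z (or_intror eq_refl)) as [-> ->].
      apply C_ext; simpl; rewrite ?cos_neg, ?sin_neg, ?cos_PI3, ?sin_PI3; lra.
    + exists (PI / 3 + PI * IZR (-1)); split; [exists (-1)%Z; tauto |].
      unfold Cexpi; destruct (shift (PI / 3) (-1)%Z (or_introl eq_refl)) as [-> ->].
      apply C_ext; simpl; rewrite ?cos_PI3, ?sin_PI3; lra.
  - left; destruct (sin_cases 1) as [-> | ->]; [nra | |].
    + exists (PI / 2); split; [exists 0%Z; left; simpl; ring |].
      apply C_ext; simpl; rewrite ?cos_PI2, ?sin_PI2; lra.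
    + exists (PI / 2 + PI * IZR (-1)); split; [exists (-1)%Z; tauto |].
      unfold Cexpi; destruct (shift (PI / 2) (-1)%Z (or_introl eq_refl)) as [-> ->].
      apply C_ext; simpl; rewrite ?cos_PI2, ?sin_PI2; lra.
  - right; destruct (sin_cases (sqrt 3 / 2)) as [-> | ->]; [nra | |].
    + exists (PI / 3); split; [exists 0%Z; left; simpl; ring |].
      apply C_ext; simpl; rewrite ?cos_PI3, ?sin_PI3; lra.
    + exists (- (PI / 3)); split; [exists 0%Z; right; left; simpl; ring |].
      apply C_ext; simpl; rewrite ?cos_neg, ?sin_neg, ?cos_PI3, ?sin_PI3; lra.
  - left; exists 0; split; [exists 0%Z; right; simpl; ring |].
    apply C_ext; simpl; rewrite ?cos_0, ?sin_0; nra.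
Qed.

Lemma int_mem_of_add_closed (P : C -> Prop) :
  P C0 -> P C1 -> P (Copp C1) -> (forall r s, P r -> P s -> P (Cadd r s)) ->
  forall k, P (IZR k, 0).
Proof.
  intros P0 P1 Pm1 P_add.
  assert (nat_mem : forall m, P (INR m, 0) /\ P (- INR m, 0)).
  { induction m as [|m [IHpos IHneg]].
    - simpl; rewrite Ropp_0; split; exact P0.
    - rewrite S_INR; split.
      + replace (INR m + 1, 0) with (Cadd (INR m, 0) C1) by (C_parts; ring); auto.
      + replace (- (INR m + 1), 0) with (Cadd (- INR m, 0) (Copp C1)) by (C_parts; ring); auto. }
  intro k; destruct (Z_le_gt_dec 0 k).
  - rewrite <- (Z2Nat.id k), <- INR_IZR_INZ by assumption; apply nat_mem.
  - replace k with (- Z.of_nat (Z.to_nat (- k)))%Z by lia.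
    rewrite opp_IZR, <- INR_IZR_INZ; apply nat_mem.
Qed.

Definition dense_in_C (P : C -> Prop) : Prop :=
  forall w eps, 0 < eps -> exists r, P r /\ Cnorm1 (Csub r w) < eps.

Section SubringsOfC.
Variable P : C -> Prop.
Hypothesis P_add : forall r s, P r -> P s -> P (Cadd r s).
Hypothesis P_mul : forall r s, P r -> P s -> P (Cmul r s).
Hypothesis P_int : forall k, P (IZR k, 0).

(* Integer combinations of [1, mu] form a lattice with a fundamental domain
   of l1-diameter [1 + Cnorm1 mu]; scaling by a small power of [x] makes it fine. *)
Lemma subring_dense x mu : P x -> P mu -> 0 < Cnorm2 x < 1 -> snd mu <> 0 -> dense_in_C P.
Proof.
  intros Px Pmu x_small mu_nonreal w eps eps_gt0.
  set (K := 1 + Cnorm1 mu).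
  assert (K_gt0 : 0 < K) by (pose proof (Cnorm1_ge0 mu); unfold K; lra).
  assert (eK_gt0 : 0 < eps / K) by (apply Rdiv_lt_0_compat; lra).
  assert (powers : forall N, exists y, P y /\ Cnorm2 y = Cnorm2 x ^ N).
  { induction N as [|N [y [Py Hy]]].
    - exists C1; split; [exact (P_int 1) | unfold Cnorm2, C1; simpl; ring].
    - exists (Cmul x y); split; [auto | rewrite Cnorm2_mul, Hy; simpl; ring]. }
  destruct (pow_lt_1_zero (Cnorm2 x) ltac:(rewrite Rabs_pos_eq; lra) ((eps / K) ^ 2 / 2)
    ltac:(nra)) as [N HN].
  destruct (powers N) as [y [Py Hy]].
  specialize (HN N (le_n N)); rewrite Rabs_pos_eq in HN by (apply pow_le; lra).
  assert (y_neq0 : y <> C0).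
  { intro y0; pose proof (pow_lt (Cnorm2 x) N ltac:(lra)).
    rewrite <- Hy, y0 in H; unfold Cnorm2, C0 in H; simpl in H; lra. }
  assert (y_small : Cnorm1 y < eps / K).
  { pose proof (Cnorm1_sqr y); pose proof (Cnorm1_ge0 y); nra. }
  set (q := Cmul w (Cinv y)).
  assert (w_eq : w = Cmul y q).
  { unfold q; pose proof (Cnorm2_neq0 y y_neq0); C_field. }
  clearbody q; set (b := snd q / snd mu); set (a := fst q - b * fst mu).
  assert (q_coords : q = Cadd (a, 0) (Cmul (b, 0) mu)) by (unfold a, b; C_field).
  set (d := Cadd (IZR (up a) - a, 0) (Cmul (IZR (up b) - b, 0) mu)).
  assert (d_le : Cnorm1 d <= K).
  { destruct (archimed a), (archimed b).
    apply Rle_trans with (Cnorm1 (IZR (up a) - a, 0) + Cnorm1 (IZR (up b) - b, 0) * Cnorm1 mu).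
    - eapply Rle_trans; [apply Cnorm1_add | apply Rplus_le_compat_l, Cnorm1_mul].
    - rewrite !Cnorm1_real, !Rabs_pos_eq by lra; pose proof (Cnorm1_ge0 mu); unfold K; nra. }
  exists (Cmul y (Cadd (IZR (up a), 0) (Cmul (IZR (up b), 0) mu))); split; [auto |].
  replace (Csub _ w) with (Cmul y d) by (rewrite w_eq, q_coords; unfold d; C_parts; ring).
  eapply Rle_lt_trans; [apply Cnorm1_mul |].
  apply Rle_lt_trans with (Cnorm1 y * K); [apply Rmult_le_compat_l; [apply Cnorm1_ge0 | exact d_le] |].
  replace eps with (eps / K * K) by (field; lra); apply Rmult_lt_compat_r; lra.
Qed.

(* On the unit circle [l + 1/l = 2 Re l] is real; subtracting the next integer
   leaves a number in [(-1, 0)] unless [2 Re l] is an integer, i.e. [l] is in F2 u F3. *)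
Lemma subring_contraction l : P l -> P (Cinv l) -> l <> C0 -> ~ (F2 l \/ F3 l) ->
  exists x, P x /\ 0 < Cnorm2 x < 1.
Proof.
  intros Pl Pinv l_neq0 not_SR; pose proof (Cnorm2_gt0 l l_neq0).
  destruct (Rtotal_order (Cnorm2 l) 1) as [lt1 | [eq1 | gt1]].
  - exists l; auto.
  - destruct l as [c s]; unfold Cnorm2 in eq1; simpl in eq1.
    set (u := up (2 * c)).
    assert (trace : Cadd (Cadd (c, s) (Cinv (c, s))) (IZR (- u), 0) = (2 * c - IZR u, 0)).
    { unfold Cinv; simpl; rewrite eq1, opp_IZR; C_parts; field. }
    destruct (archimed (2 * c)) as [up_gt up_le]; fold u in up_gt, up_le.
    exists (2 * c - IZR u, 0); split; [rewrite <- trace; auto |].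
    destruct (Req_dec (2 * c - IZR u) 0) as [h0 | h0].
    { destruct not_SR; apply (F2_or_F3_of_integral_trace c s u); auto; lra. }
    destruct (Req_dec (2 * c - IZR u) (-1)) as [h1 | h1].
    { destruct not_SR; apply (F2_or_F3_of_integral_trace c s (u - 1)); auto.
      rewrite minus_IZR; simpl; lra. }
    unfold Cnorm2; simpl; split; nra.
  - exists (Cinv l); split; [auto |].
    rewrite Cnorm2_inv by auto; split; [apply Rinv_0_lt_compat; lra |].
    rewrite <- Rinv_1; apply Rinv_lt_contravar; lra.
Qed.
End SubringsOfC.

Definition equivariant_at {n} (G : aff n -> Prop) (L : vec n -> C) (c0 z : vec n) : Prop :=
  forall f, G f -> L (vsub (apply f z) c0) = Cmul (ratio f) (L (vsub z c0)).

Section SimilarityGroup.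
Context {n : nat} {G : aff n -> Prop} (G_subgroup : is_subgroup G).

Lemma G_ratio_neq0 f : G f -> ratio f <> C0.
Proof. apply G_subgroup. Qed.
Lemma G_id : G aid.
Proof. apply G_subgroup. Qed.
Lemma G_comp f g : G f -> G g -> G (acomp f g).
Proof. apply G_subgroup. Qed.
Lemma G_inv f : G f -> G (ainv f).
Proof. apply G_subgroup. Qed.
Lemma G_conj f g : G f -> G g -> G (acomp (acomp f g) (ainv f)).
Proof. intros; apply G_comp; [apply G_comp | apply G_inv]; auto. Qed.

Definition transl (t : vec n) : Prop := exists f, G f /\ ratio f = C1 /\ trans f = t.
Definition multiplier (r : C) : Prop := forall t, transl t -> transl (vscale r t).

Lemma transl0 : transl vzero.
Proof. exists aid; split; [apply G_id | auto]. Qed.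
Lemma transl_add s t : transl s -> transl t -> transl (vadd s t).
Proof.
  intros [f [Gf [rf tf]]] [g [Gg [rg tg]]]; exists (acomp f g); split; [apply G_comp; auto |].
  simpl; rewrite rf, rg, tf, tg; split; [C_parts | vec_parts]; ring.
Qed.
Lemma transl_ratio f t : G f -> transl t -> transl (vscale (ratio f) t).
Proof.
  intros Gf [h [Gh [rh th]]]; exists (acomp (acomp f h) (ainv f)); split; [apply G_conj; auto |].
  pose proof (Cnorm2_neq0 _ (G_ratio_neq0 f Gf)).
  simpl; rewrite rh, th; split; [C_field | vec_parts; field; nonzero_by_ring].
Qed.
Lemma transl_inv_ratio f t : G f -> transl t -> transl (vscale (Cinv (ratio f)) t).
Proof. intros Gf; apply (transl_ratio (ainv f)), G_inv; auto. Qed.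

Lemma transl_commutator f g : G f -> G g ->
  transl (vadd (vscale (Csub (ratio f) C1) (trans g)) (vscale (Copp (Csub (ratio g) C1)) (trans f))).
Proof.
  intros Gf Gg; exists (acomp (acomp f g) (ainv (acomp g f))).
  assert (Hgf : ratio (acomp g f) <> C0) by (apply G_ratio_neq0, G_comp; auto).
  pose proof (Cnorm2_neq0 _ Hgf) as Hd; simpl in Hd.
  split; [apply G_comp; [apply G_comp | apply G_inv, G_comp]; auto |].
  simpl; split; [C_field | vec_parts; field; nonzero_by_ring].
Qed.

Lemma multiplier_ratio f : G f -> multiplier (ratio f).
Proof. intros Gf t; apply transl_ratio; auto. Qed.
Lemma multiplier_add r s : multiplier r -> multiplier s -> multiplier (Cadd r s).
Proof.
  intros Hr Hs t Ht; replace (vscale (Cadd r s) t) with (vadd (vscale r t) (vscale s t))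
    by (vec_parts; ring); apply transl_add; auto.
Qed.
Lemma multiplier_mul r s : multiplier r -> multiplier s -> multiplier (Cmul r s).
Proof.
  intros Hr Hs t Ht; replace (vscale (Cmul r s) t) with (vscale r (vscale s t))
    by (vec_parts; ring); auto.
Qed.
Lemma multiplier_int k : multiplier (IZR k, 0).
Proof.
  apply int_mem_of_add_closed; [| | | exact multiplier_add]; intros t Ht.
  - replace (vscale C0 t) with (@vzero n) by (vec_parts; ring); apply transl0.
  - replace (vscale C1 t) with t by (vec_parts; ring); auto.
  - destruct Ht as [f [Gf [rf tf]]]; exists (ainv f); split; [apply G_inv; auto |].
    simpl; rewrite rf, tf; split; [C_parts | vec_parts]; field.
Qed.

Lemma multiplier_dense : ~ Lambda_subset_R G -> ~ subset_SR G -> dense_in_C multiplier.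
Proof.
  intros not_real not_SR.
  assert (exists f, G f /\ snd (ratio f) <> 0) as [g [Gg g_nonreal]].
  { apply NNPP; intro h; apply not_real; intros l [f [Gf <-]].
    apply NNPP; intro h'; apply h; exists f; auto. }
  assert (exists f, G f /\ ~ in_SR f) as [f [Gf f_not_SR]].
  { apply NNPP; intro h; apply not_SR; intros f Gf; apply NNPP; intro h'; apply h; exists f; auto. }
  destruct (subring_contraction multiplier multiplier_add multiplier_int (ratio f))
    as [x [Mx x_small]]; auto.
  - apply multiplier_ratio; auto.
  - intros t; apply transl_inv_ratio; auto.
  - apply G_ratio_neq0; auto.
  - apply (subring_dense multiplier multiplier_add multiplier_mul multiplier_int x (ratio g)); auto.
    apply multiplier_ratio; auto.
Qed.

Lemma multiplier_dense_of_closure : closure_Lambda_is_C G -> dense_in_C multiplier.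
Proof.
  intros dense w eps eps_gt0; destruct (dense w (eps / 2)) as [l [[f [Gf <-]] near]]; [lra |].
  exists (ratio f); split; [apply multiplier_ratio; auto |].
  pose proof (Cnorm1_le_Cnorm (Csub (ratio f) w)); lra.
Qed.

Inductive transl_span : vec n -> Prop :=
  | transl_span0 : transl_span vzero
  | transl_span_step x a t : transl_span x -> transl t -> transl_span (vadd x (vscale a t)).

Lemma transl_span_add x y : transl_span x -> transl_span y -> transl_span (vadd x y).
Proof.
  intros Hx Hy; induction Hy as [| y a t _ IH Ht].
  - replace (vadd x vzero) with x by (vec_parts; ring); auto.
  - replace (vadd x (vadd y (vscale a t))) with (vadd (vadd x y) (vscale a t)) by (vec_parts; ring).
    constructor; auto.
Qed.
Lemma transl_span_scale a x : transl_span x -> transl_span (vscale a x).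
Proof.
  intro Hx; induction Hx as [| x b t _ IH Ht].
  - replace (vscale a vzero) with (@vzero n) by (vec_parts; ring); constructor.
  - replace (vscale a (vadd x (vscale b t))) with (vadd (vscale a x) (vscale (Cmul a b) t))
      by (vec_parts; ring); constructor; auto.
Qed.
Lemma transl_span_sub x y : transl_span x -> transl_span y -> transl_span (vsub x y).
Proof. intros; apply transl_span_add, transl_span_scale; auto. Qed.
Lemma transl_span_transl a t : transl t -> transl_span (vscale a t).
Proof.
  intro Ht; replace (vscale a t) with (vadd vzero (vscale a t)) by (vec_parts; ring).
  constructor; [constructor | auto].
Qed.

Lemma transl_dense_in_span : dense_in_C multiplier -> forall s, transl_span s ->
  forall eps, 0 < eps -> exists t, transl t /\ forall i, Cnorm1 (Csub (t i) (s i)) < eps.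
Proof.
  intros dense s Hs; induction Hs as [| s a t _ IH Ht]; intros eps eps_gt0.
  - exists vzero; split; [apply transl0 |]; intro i.
    unfold vzero, Cnorm1, Csub, Cadd, Copp, C0; simpl; rewrite Ropp_0, Rplus_0_r, Rabs_R0; lra.
  - destruct (IH (eps / 2)) as [t' [Ht' near]]; [lra |].
    destruct (vec_bounded t) as [K [K_gt0 t_le]].
    destruct (dense a (eps / (2 * K))) as [r [Mr r_near]]; [apply Rdiv_lt_0_compat; lra |].
    exists (vadd t' (vscale r t)); split; [apply transl_add; auto |]; intro i.
    replace (Csub (vadd t' (vscale r t) i) (vadd s (vscale a t) i))
      with (Cadd (Csub (t' i) (s i)) (Cmul (Csub r a) (t i))) by (unfold vadd, vscale; C_parts; ring).
    eapply Rle_lt_trans; [apply Cnorm1_add |].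
    eapply Rle_lt_trans; [apply Rplus_le_compat_l, Cnorm1_mul |].
    assert (Cnorm1 (Csub r a) * Cnorm1 (t i) <= eps / (2 * K) * K).
    { apply Rmult_le_compat; [apply Cnorm1_ge0 | apply Cnorm1_ge0 | lra | apply t_le]. }
    replace (eps / (2 * K) * K) with (eps / 2) in H by (field; lra).
    specialize (near i); lra.
Qed.

Lemma nonabelian_center : nonabelian G -> exists f c, G f /\ ratio f <> C1 /\ apply f c = c.
Proof.
  intros [f [g [Gf [Gg fg_neq]]]].
  assert (exists h, G h /\ ratio h <> C1) as [h [Gh h_neq1]].
  { apply NNPP; intro none; apply fg_neq.
    assert (translation : forall h, G h -> ratio h = C1).
    { intros h Gh; apply NNPP; intro; apply none; exists h; auto. }
    unfold acomp; rewrite (translation f Gf), (translation g Gg); f_equal; vec_parts; ring. }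
  exists h, (vscale (Cinv (Csub C1 (ratio h))) (trans h)); split; [| split]; auto.
  pose proof (Cnorm2_neq0 _ (Csub_neq0 _ _ (not_eq_sym h_neq1))); vec_parts; field; nonzero_by_ring.
Qed.

Lemma E_G_affine : is_affine_subspace (E_G G).
Proof. intros x y t Ex Ey A A_affine A_Gamma; apply A_affine; [apply Ex | apply Ey]; auto. Qed.
Lemma Gamma_E_G c : Gamma G c -> E_G G c.
Proof. intros Hc A _ A_Gamma; auto. Qed.

(* [f] conjugates a non-translation [g] with center [c] to one with center [f c]. *)
Lemma E_G_apply f x : G f -> E_G G x -> E_G G (apply f x).
Proof.
  intros Gf Ex A A_affine A_Gamma; apply (Ex (fun y => A (apply f y))).
  - intros y1 y2 t h1 h2.
    replace (apply f (vadd (vscale (Csub C1 t) y1) (vscale t y2)))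
      with (vadd (vscale (Csub C1 t) (apply f y1)) (vscale t (apply f y2))) by (vec_parts; ring).
    apply A_affine; auto.
  - intros c [g [Gg [g_neq1 g_c]]]; apply A_Gamma.
    exists (acomp (acomp f g) (ainv f)); split; [apply G_conj; auto | split].
    + pose proof (Cnorm2_neq0 _ (G_ratio_neq0 f Gf)); simpl.
      replace (Cmul (Cmul (ratio f) (ratio g)) (Cinv (ratio f))) with (ratio g) by C_field; auto.
    + rewrite !apply_acomp, apply_ainvK, g_c; auto; apply G_ratio_neq0; auto.
Qed.

Lemma E_G_direction c0 : E_G G c0 -> linear_subspace (fun x => E_G G (vadd c0 x)).
Proof.
  intro Ec0; split; [| split].
  - replace (vadd c0 vzero) with c0 by (vec_parts; ring); auto.
  - (* [c0 + (x + y)] is [2 m - c0] with [m] the midpoint of [c0 + x] and [c0 + y]. *)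
    intros x y Ex Ey; pose proof (E_G_affine _ _ (2, 0) Ec0 (E_G_affine _ _ (1 / 2, 0) Ex Ey)).
    replace (vadd c0 (vadd x y)) with (vadd (vscale (Csub C1 (2, 0)) c0) (vscale (2, 0)
      (vadd (vscale (Csub C1 (1 / 2, 0)) (vadd c0 x)) (vscale (1 / 2, 0) (vadd c0 y)))))
      by (vec_parts; field); auto.
  - intros a x Ex; pose proof (E_G_affine _ _ a Ec0 Ex).
    replace (vadd c0 (vscale a x)) with (vadd (vscale (Csub C1 a) c0) (vscale a (vadd c0 x)))
      by (vec_parts; ring); auto.
Qed.

(* If [f0] and [g] have centers [c0] and [c], the commutator of [f0] and [g] is
   the translation by [(ratio f0 - 1)(1 - ratio g)(c - c0)]. *)
Lemma E_G_sub_transl_span f0 c0 : G f0 -> ratio f0 <> C1 -> apply f0 c0 = c0 ->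
  forall x, E_G G x -> transl_span (vsub x c0).
Proof.
  intros Gf0 f0_neq1 f0_c0 x Ex; apply (Ex (fun y => transl_span (vsub y c0))).
  - intros y1 y2 t h1 h2.
    replace (vsub (vadd (vscale (Csub C1 t) y1) (vscale t y2)) c0)
      with (vadd (vscale (Csub C1 t) (vsub y1 c0)) (vscale t (vsub y2 c0))) by (vec_parts; ring).
    apply transl_span_add; apply transl_span_scale; auto.
  - intros c [g [Gg [g_neq1 g_c]]].
    set (kappa := Cmul (Csub (ratio f0) C1) (Csub C1 (ratio g))).
    assert (kappa_neq0 : kappa <> C0) by (apply Cmul_neq0; apply Csub_neq0; auto).
    pose proof (Cnorm2_neq0 _ kappa_neq0).
    replace (vsub c c0) with (vscale (Cinv kappa)
      (vadd (vscale (Csub (ratio f0) C1) (trans g)) (vscale (Copp (Csub (ratio g) C1)) (trans f0)))).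
    + apply transl_span_transl, transl_commutator; auto.
    + apply functional_extensionality; intro i; unfold vsub, vadd, vscale.
      rewrite (trans_of_fixed_point g c i g_c), (trans_of_fixed_point f0 c0 i f0_c0).
      unfold kappa in *; C_field.
Qed.

Lemma transl_apply t : transl t -> exists h, G h /\ forall x, apply h x = vadd x t.
Proof.
  intros [h [Gh [rh th]]]; exists h; split; auto; intro x.
  unfold apply; rewrite rh, th; vec_parts; ring.
Qed.

Lemma has_dense_orbit_of_dense_off_E_G : nonabelian G -> ~ Lambda_subset_R G -> ~ subset_SR G ->
  (forall z, ~ E_G G z -> dense_orbit G z) -> has_dense_orbit G.
Proof.
  intros nonab not_real not_SR dense_off.
  destruct (classic (forall z, E_G G z)) as [E_full | not_full].
  2: { apply not_all_ex_not in not_full; destruct not_full as [z z_off]; exists z; auto. }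
  destruct (nonabelian_center nonab) as [f0 [c0 [Gf0 [f0_neq1 f0_c0]]]].
  exists c0; intros w eps eps_gt0.
  destruct (transl_dense_in_span (multiplier_dense not_real not_SR) (vsub w c0)
    (E_G_sub_transl_span f0 c0 Gf0 f0_neq1 f0_c0 w (E_full w)) eps eps_gt0) as [t [Ht near]].
  destruct (transl_apply t Ht) as [h [Gh h_eq]].
  exists h; split; auto; intro i.
  replace (Csub (apply h c0 i) (w i)) with (Csub (t i) (vsub w c0 i))
    by (rewrite h_eq, vsub_eq; unfold vadd; C_parts; ring).
  eapply Rle_lt_trans; [apply Cnorm_le_Cnorm1 | apply near].
Qed.

(* [h (g z) - w = (ratio g - mu) (z - p) + (t - s)]: the ratio of [g] approximates
   the transverse coordinate [mu] of [w] and the translation [h] corrects the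
   error [s] inside [E_G]. *)
Lemma dense_orbit_of_decomposition z p : nonabelian G -> closure_Lambda_is_C G -> E_G G p ->
  (forall w, exists e mu, E_G G (vadd p e) /\ w = vadd (vadd p e) (vscale mu (vsub z p))) ->
  dense_orbit G z.
Proof.
  intros nonab Lambda_dense Ep decomp w eps eps_gt0.
  destruct (nonabelian_center nonab) as [f0 [c0 [Gf0 [f0_neq1 f0_c0]]]].
  destruct (decomp w) as [e [mu [Epe w_eq]]].
  set (u := vsub z p); destruct (vec_bounded u) as [K [K_gt0 u_le]].
  destruct (Lambda_dense mu (eps / (4 * K))) as [l [[g [Gg <-]] g_near]].
  { apply Rdiv_lt_0_compat; lra. }
  set (s := vsub (vadd p e) (apply g p)).
  assert (s_span : transl_span s).
  { replace s with (vsub (vsub (vadd p e) c0) (vsub (apply g p) c0)) by (unfold s; vec_parts; ring).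
    apply transl_span_sub; apply (E_G_sub_transl_span f0 c0); auto; apply E_G_apply; auto. }
  destruct (transl_dense_in_span (multiplier_dense_of_closure Lambda_dense) s s_span (eps / 2))
    as [t [Ht t_near]]; [lra |].
  destruct (transl_apply t Ht) as [h [Gh h_eq]].
  exists (acomp h g); split; [apply G_comp; auto |]; intro i.
  assert (error : Csub (apply (acomp h g) z i) (w i)
    = Cadd (Cmul (Csub (ratio g) mu) (u i)) (Csub (t i) (s i))).
  { rewrite apply_acomp, h_eq, w_eq; unfold u, s, vsub, vadd, apply, vscale; C_parts; ring. }
  rewrite error; eapply Rle_lt_trans; [apply Cnorm_le_Cnorm1 |].
  eapply Rle_lt_trans; [apply Cnorm1_add |].
  eapply Rle_lt_trans; [apply Rplus_le_compat_r, Cnorm1_mul |].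
  assert (Cnorm1 (Csub (ratio g) mu) * Cnorm1 (u i) <= 2 * (eps / (4 * K)) * K).
  { apply Rmult_le_compat; [apply Cnorm1_ge0 | apply Cnorm1_ge0 | | apply u_le].
    pose proof (Cnorm1_le_Cnorm (Csub (ratio g) mu)); lra. }
  replace (2 * (eps / (4 * K)) * K) with (eps / 2) in H by (field; lra).
  specialize (t_near i); lra.
Qed.

Lemma equivariant_of_vanishing L c0 z : linear_form L -> E_G G c0 ->
  (forall x, E_G G (vadd c0 x) -> L x = C0) -> equivariant_at G L c0 z.
Proof.
  intros [Ladd Lscale] Ec0 L_vanish f Gf.
  replace (vsub (apply f z) c0) with (vadd (vscale (ratio f) (vsub z c0)) (vsub (apply f c0) c0))
    by (vec_parts; ring).
  rewrite Ladd, Lscale, (L_vanish (vsub (apply f c0) c0)); [C_parts; ring |].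
  rewrite vadd_vsub; apply E_G_apply; auto.
Qed.

Lemma equivariant_offset L c0 z v f : linear_form L -> equivariant_at G L c0 z -> G f ->
  L (vsub (apply f z) (vadd c0 v)) = Csub (Cmul (ratio f) (L (vsub z c0))) (L v).
Proof.
  intros L_lin L_eqv Gf; rewrite <- L_eqv, <- linear_form_sub by auto; f_equal; vec_parts; ring.
Qed.

Lemma equivariant_form_neq0 {L K c0 z y} : linear_form L -> bounded_form L K -> L y = C1 ->
  equivariant_at G L c0 z -> dense_orbit G z -> L (vsub z c0) <> C0.
Proof.
  intros L_lin L_bdd Ly L_eqv z_dense Lz0; pose proof (proj1 L_bdd) as K_ge0.
  set (d := 1 / (4 * (K + 1))).
  destruct (z_dense (vadd c0 y) d) as [f [Gf near]]; [unfold d; apply Rdiv_lt_0_compat; lra |].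
  pose proof (bounded_form_near L K _ _ d L_bdd near) as bound.
  rewrite (equivariant_offset L c0 z y f), Lz0, Ly in bound by auto.
  replace (Csub (Cmul (ratio f) C0) C1) with (Ropp 1, 0) in bound by (C_parts; ring).
  rewrite Cnorm1_real, Rabs_Ropp, Rabs_R1 in bound.
  assert (K * (2 * d) < 1) by (unfold d; apply Rmult_lt_reg_r with (2 * (K + 1)); field_simplify; lra).
  lra.
Qed.

Lemma Lambda_dense_of_equivariant_form {L K c0 z y} : linear_form L -> bounded_form L K ->
  L y = C1 -> equivariant_at G L c0 z -> dense_orbit G z -> L (vsub z c0) <> C0 ->
  closure_Lambda_is_C G.
Proof.
  intros L_lin L_bdd Ly L_eqv z_dense Lz_neq0 w eps eps_gt0; pose proof (proj1 L_bdd) as K_ge0.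
  set (b := L (vsub z c0)); pose proof (Cnorm_gt0 _ Lz_neq0) as b_gt0; fold b in b_gt0.
  set (d := eps * Cnorm b / (2 * (K + 1))).
  assert (d_gt0 : 0 < d) by (unfold d; apply Rdiv_lt_0_compat; [apply Rmult_lt_0_compat |]; lra).
  destruct (z_dense (vadd c0 (vscale (Cmul w b) y)) d d_gt0) as [f [Gf near]].
  pose proof (bounded_form_near L K _ _ d L_bdd near) as bound.
  rewrite (equivariant_offset L c0 z _ f), (proj2 L_lin), Ly in bound by auto; fold b in bound.
  replace (Csub (Cmul (ratio f) b) (Cmul (Cmul w b) C1)) with (Cmul (Csub (ratio f) w) b)
    in bound by (C_parts; ring).
  exists (ratio f); split; [exists f; auto |].
  pose proof (Cnorm_le_Cnorm1 (Cmul (Csub (ratio f) w) b)); rewrite Cnorm_mul in H.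
  apply Rmult_lt_reg_r with (Cnorm b); auto.
  assert (K * (2 * d) < eps * Cnorm b).
  { unfold d; apply Rmult_lt_reg_r with (2 * (K + 1)); [lra |]; field_simplify; nra. }
  lra.
Qed.
End SimilarityGroup.

From HB Require Import structures.
From mathcomp Require Import all_boot all_algebra boolp Rstruct zify.
(* Re-import so that [ratio] is [Defs.ratio] rather than [fraction.ratio]. *)
Import Pilot.Defs GRing.Theory.

HB.instance Definition _ := Choice.copy C (R * R)%type.

Lemma Cadd_assoc : associative Cadd. Proof. move=> x y z; C_parts; ring. Qed.
Lemma Cadd_comm : commutative Cadd. Proof. move=> x y; C_parts; ring. Qed.
Lemma Cadd_0l : left_id C0 Cadd. Proof. move=> x; C_parts; ring. Qed.
Lemma Cadd_oppl : left_inverse C0 Copp Cadd. Proof. move=> x; C_parts; ring. Qed.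
HB.instance Definition _ := GRing.isZmodule.Build C Cadd_assoc Cadd_comm Cadd_0l Cadd_oppl.

Lemma Cmul_assoc : associative Cmul. Proof. move=> x y z; C_parts; ring. Qed.
Lemma Cmul_comm : commutative Cmul. Proof. move=> x y; C_parts; ring. Qed.
Lemma Cmul_1l : left_id C1 Cmul. Proof. move=> x; C_parts; ring. Qed.
Lemma Cmul_addl : left_distributive Cmul Cadd. Proof. move=> x y z; C_parts; ring. Qed.
Lemma C1_neq_C0 : C1 != C0.
Proof. by apply/eqP => /(f_equal fst); apply: R1_neq_R0. Qed.
HB.instance Definition _ :=
  GRing.Zmodule_isComNzRing.Build C Cmul_assoc Cmul_comm Cmul_1l Cmul_addl C1_neq_C0.

Lemma Cinv_0 : Cinv C0 = C0. Proof. C_parts; rewrite /Rdiv; ring. Qed.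
HB.instance Definition _ := GRing.ComNzRing_isField.Build C
  (fun x (hx : x != 0%R) => Cmul_inv_l x (elimN eqP hx)) Cinv_0.

Lemma Rsum_ge0 {T : Type} (f : T -> R) (s : seq T) :
  (forall y, 0 <= f y) -> 0 <= \big[Rplus/0]_(y <- s) f y.
Proof.
  move=> f_ge0; elim: s => [|y s IH]; rewrite ?big_nil ?big_cons; [lra | have := f_ge0 y; lra].
Qed.

Lemma Cnorm1_sum_le {I : Type} (s : seq I) (x m : I -> C) e :
  (forall i, Cnorm1 (x i) <= e) ->
  Cnorm1 (\big[Cadd/C0]_(i <- s) Cmul (x i) (m i)) <= \big[Rplus/0]_(i <- s) Cnorm1 (m i) * e.
Proof.
  move=> x_le; elim: s => [|i s IH]; rewrite ?big_nil ?big_cons.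
  - rewrite /Cnorm1 /= Rabs_R0; lra.
  - apply: Rle_trans (Cnorm1_add _ _) _; apply: Rle_trans (Rplus_le_compat_r _ _ _ (Cnorm1_mul _ _)) _.
    have := Rmult_le_compat_r _ _ _ (Cnorm1_ge0 (m i)) (x_le i); lra.
Qed.

Section CoordinateRows.
Context {n : nat}.
Local Open Scope ring_scope.

Definition ord_of_idx (i : idx n) : 'I_n := Ordinal (introT ltP (proj2_sig i)).
Definition idx_of_ord (j : 'I_n) : idx n := exist _ (nat_of_ord j) (elimT ltP (ltn_ord j)).
Lemma idx_of_ordK i : idx_of_ord (ord_of_idx i) = i.
Proof. by case: i => j hj; rewrite /idx_of_ord /=; congr exist; apply: proof_irrelevance. Qed.

Definition row_of_vec (x : vec n) : 'rV[C]_n := \row_j x (idx_of_ord j).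
Definition vec_of_row (r : 'rV[C]_n) : vec n := fun i => r 0 (ord_of_idx i).

Lemma row_of_vecK x : vec_of_row (row_of_vec x) = x.
Proof. by apply: functional_extensionality => i; rewrite /vec_of_row mxE idx_of_ordK. Qed.
Lemma vec_of_rowK r : row_of_vec (vec_of_row r) = r.
Proof. by apply/rowP => j; rewrite mxE; congr (r 0 _); apply: val_inj. Qed.
Lemma row_of_vec_inj : injective row_of_vec.
Proof. exact: can_inj row_of_vecK. Qed.
Lemma row_of_vec0 : row_of_vec vzero = 0.
Proof. by apply/rowP => j; rewrite !mxE. Qed.
Lemma row_of_vecD x y : row_of_vec (vadd x y) = row_of_vec x + row_of_vec y.
Proof. by apply/rowP => j; rewrite !mxE. Qed.
Lemma row_of_vecZ a x : row_of_vec (vscale a x) = a *: row_of_vec x.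
Proof. by apply/rowP => j; rewrite !mxE. Qed.
Lemma vec_of_row0 : vec_of_row 0 = vzero.
Proof. by apply: row_of_vec_inj; rewrite vec_of_rowK row_of_vec0. Qed.
Lemma vec_of_rowD r s : vec_of_row (r + s) = vadd (vec_of_row r) (vec_of_row s).
Proof. by apply: row_of_vec_inj; rewrite row_of_vecD !vec_of_rowK. Qed.
Lemma vec_of_rowZ a r : vec_of_row (a *: r) = vscale a (vec_of_row r).
Proof. by apply: row_of_vec_inj; rewrite row_of_vecZ !vec_of_rowK. Qed.

(* Conversions between [nat]-indexed families of length [k] and matrices with
   [k] rows; beyond index [k] the families take the junk value 0. *)
Definition vecs_mx k (v : nat -> vec n) : 'M[C]_(k, n) := \matrix_(j < k) row_of_vec (v j).
Definition mx_rows {k} (A : 'M[C]_(k, n)) (j : nat) : vec n :=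
  if insub j is Some o then vec_of_row (row o A) else vzero.
Definition coefs_of_row {k} (a : 'rV[C]_k) (j : nat) : C :=
  if insub j is Some o then a 0 o else 0.

Lemma row_vecs_mx k v (o : 'I_k) : row o (vecs_mx k v) = row_of_vec (v o).
Proof. exact: rowK. Qed.
Lemma coefs_of_row_ord k (a : 'rV[C]_k) (o : 'I_k) : coefs_of_row a o = a 0 o.
Proof. by rewrite /coefs_of_row valK. Qed.

Lemma row_of_vlin k c v : row_of_vec (vlin k c v) = \sum_(j < k) c j *: row_of_vec (v j).
Proof.
  elim: k => [|k IH] /=; first by rewrite big_ord0 row_of_vec0.
  by rewrite big_ord_recr /= row_of_vecD IH row_of_vecZ.
Qed.
Lemma row_of_vlin_coefs k (a : 'rV[C]_k) v :
  row_of_vec (vlin k (coefs_of_row a) v) = a *m vecs_mx k v.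
Proof.
  rewrite row_of_vlin mulmx_sum_row; apply: eq_bigr => o _.
  by rewrite coefs_of_row_ord row_vecs_mx.
Qed.
Lemma vlin_of_submx k v y : (y <= vecs_mx k v)%MS -> exists c, vec_of_row y = vlin k c v.
Proof.
  by case/submxP => a ->; exists (coefs_of_row a); apply: row_of_vec_inj;
    rewrite vec_of_rowK row_of_vlin_coefs.
Qed.

Lemma mx_rows_ord k (A : 'M[C]_(k, n)) (o : 'I_k) : mx_rows A o = vec_of_row (row o A).
Proof. by rewrite /mx_rows valK. Qed.
Lemma vecs_mx_rows k (A : 'M[C]_(k, n)) : vecs_mx k (mx_rows A) = A.
Proof. by apply/row_matrixP => o; rewrite row_vecs_mx mx_rows_ord vec_of_rowK. Qed.

Lemma lin_indep_row_free k v : lin_indep k v <-> row_free (vecs_mx k v).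
Proof.
  split=> [indep | free c lin0 j /ltP ltjk].
  - apply: contraT => not_free; set a := nz_row (kermx (vecs_mx k v)).
    have a_neq0 : a != 0.
    { by rewrite nz_row_eq0 -mxrank_eq0 mxrank_ker subn_eq0 -ltnNge ltn_neqAle rank_leq_row andbT. }
    have a_ker : a *m vecs_mx k v = 0 by apply/sub_kermxP; apply: nz_row_sub.
    have lin0 : vlin k (coefs_of_row a) v = vzero.
    { by apply: row_of_vec_inj; rewrite row_of_vlin_coefs a_ker row_of_vec0. }
    case/negP: a_neq0; apply/eqP/rowP => o; rewrite mxE -coefs_of_row_ord.
    exact: indep _ lin0 _ (elimT ltP (ltn_ord o)).
  - have : (\row_(o < k) c o) *m vecs_mx k v = 0 *m vecs_mx k v.
    { rewrite mul0mx -row_of_vec0 -lin0 row_of_vlin mulmx_sum_row; apply: eq_bigr => o _.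
      by rewrite row_vecs_mx mxE. }
    by move/(row_free_inj free)/(congr1 (fun r : 'rV_k => r 0 (Ordinal ltjk))); rewrite !mxE.
Qed.

Lemma lin_indep_full (v : nat -> vec n) : lin_indep n v -> forall w, exists c, w = vlin n c v.
Proof.
  move=> /lin_indep_row_free free w; rewrite -(row_of_vecK w); apply: vlin_of_submx.
  by apply: submx_full; rewrite row_full_unit -row_free_unit.
Qed.

Lemma annihilating_form k (v : nat -> vec n) : (k < n)%coq_nat ->
  exists L K, linear_form L /\ bounded_form L K /\
    (forall j, (j < k)%coq_nat -> L (v j) = C0) /\ exists y, L y = C1.
Proof.
  move=> /ltP ltkn; have M_ker := mulmx_coker (vecs_mx k v).
  have := mxrank_coker (vecs_mx k v); move: (cokermx _) M_ker => M M_ker M_rank.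
  have M_neq0 : M != 0%R.
  { by rewrite -mxrank_eq0 M_rank subn_eq0 -ltnNge (leq_ltn_trans (rank_leq_row _) ltkn). }
  have [i0 [j0 Mij_neq0]] : exists i0 j0, M i0 j0 != 0%R.
  { apply: NNPP => no_entry; case/negP: M_neq0; apply/eqP/matrixP => i j; rewrite mxE.
    by case: (eqVneq (M i j) 0%R) => // Mij; exfalso; apply: no_entry; exists i, j. }
  exists (fun x => ((row_of_vec x *m M) 0 j0)%R),
    (\big[Rplus/0]_(i <- index_enum 'I_n) Cnorm1 (M i j0)).
  split; [|split; [|split]].
  - by split=> [x y | a x]; rewrite ?row_of_vecD ?row_of_vecZ ?mulmxDl -?scalemxAl mxE.
  - split; first by apply: Rsum_ge0 => i; apply: Cnorm1_ge0.
    move=> w e w_le; rewrite mxE; apply: Cnorm1_sum_le => i; rewrite mxE; apply: w_le.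
  - move=> j /ltP ltjk.
    by rewrite -(row_vecs_mx _ v (Ordinal ltjk)) -row_mul M_ker row0 mxE.
  - exists (vec_of_row ((M i0 j0)^-1 *: delta_mx 0 i0)%R).
    by rewrite vec_of_rowK -scalemxAl -rowE !mxE mulVf.
Qed.

Lemma subspace_basis (D : vec n -> Prop) : linear_subspace D ->
  exists k v, (k <= n)%coq_nat /\ lin_indep k v /\ (forall j, (j < k)%coq_nat -> D (v j)) /\
    forall x, D x -> exists c, x = vlin k c v.
Proof.
  case=> D0 [Dadd Dscale].
  pose inD (B : 'M[C]_n) := forall y, (y <= B)%MS -> D (vec_of_row y).
  have inD0 : inD 0%R by move=> y; rewrite submx0 => /eqP ->; rewrite vec_of_row0.
  have inD_add B x : inD B -> D x -> inD (B + row_of_vec x)%MS.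
  { move=> inB Dx y /sub_addsmxP [[a b] /= ->]; rewrite vec_of_rowD; apply: Dadd.
    - by apply: inB; apply: submxMl.
    - have /sub_rVP [c ->] : (b *m row_of_vec x <= row_of_vec x)%MS by apply: submxMl.
      by rewrite vec_of_rowZ row_of_vecK; apply: Dscale. }
  pose has_rank r := `[< exists B, inD B /\ \rank B = r >].
  have ex_rank : exists r, has_rank r by exists 0%N; apply/asboolP; exists 0; rewrite mxrank0.
  have rank_le r : has_rank r -> (r <= n)%N by move=> /asboolP [B [_ <-]]; apply: rank_leq_col.
  case: (ex_maxnP ex_rank rank_le) => r /asboolP [B [inB rB]] rank_max.
  have spanB x : D x -> (row_of_vec x <= B)%MS.
  { move=> Dx; apply: contraT => x_notin.
    have : (B < B + row_of_vec x)%MS.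
    { by rewrite ltmxE addsmxSl /=; apply: contra x_notin; apply: submx_trans; apply: addsmxSr. }
    have le_r : (\rank (B + row_of_vec x)%MS <= r)%N.
    { by apply: rank_max; apply/asboolP; exists (B + row_of_vec x)%MS; split; [apply: inD_add|]. }
    by move: le_r; rewrite -rB ltmxErank leqNgt => /negPf ->; rewrite andbF. }
  exists (\rank B), (mx_rows (row_base B)); split; [|split; [|split]].
  - by apply/leP; apply: rank_leq_col.
  - by apply/lin_indep_row_free; rewrite vecs_mx_rows row_base_free.
  - move=> j /ltP ltj; rewrite -[j]/(nat_of_ord (Ordinal ltj)) mx_rows_ord; apply: inB.
    by rewrite -(eq_row_base B); apply: row_sub.
  - move=> x /spanB; rewrite -(eq_row_base B) -[X in (_ <= X)%MS]vecs_mx_rows.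
    by case/vlin_of_submx => c; rewrite row_of_vecK; exists c.
Qed.

Lemma lin_indep_extend_span (v : nat -> vec n) u : lin_indep (n - 1) v ->
  ~ (exists c, u = vlin (n - 1) c v) ->
  forall w, exists c mu, w = vadd (vlin (n - 1) c v) (vscale mu u).
Proof.
  move=> /lin_indep_row_free free u_notin w; set V := vecs_mx (n - 1) v.
  have u_notinV : ~~ (row_of_vec u <= V)%MS.
  { apply/negP => /vlin_of_submx [c]; rewrite row_of_vecK => u_eq.
    by apply: u_notin; exists c. }
  have full : row_full (V + row_of_vec u)%MS.
  { have : (V < V + row_of_vec u)%MS.
    { by rewrite ltmxE addsmxSl /=; apply: contra u_notinV; apply: submx_trans; apply: addsmxSr. }
    rewrite ltmxErank (eqP free) => /andP [_ lt_rank].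
    by rewrite /row_full eqn_leq rank_leq_col /= (leq_trans _ lt_rank) // subn1 leqSpred. }
  have /sub_addsmxP [[a b] /= w_eq] := submx_full (row_of_vec w) full.
  exists (coefs_of_row a), (b 0 0); apply: row_of_vec_inj.
  rewrite w_eq row_of_vecD row_of_vecZ row_of_vlin_coefs; congr (_ + _).
  by apply/rowP => j; rewrite !mxE big_ord1 !mxE.
Qed.
End CoordinateRows.

Section DenseOrbits.
Context {n : nat} {G : aff n -> Prop} (G_subgroup : is_subgroup G).

Lemma dense_orbit_E_G_codim_le1 : nonabelian G -> has_dense_orbit G ->
  (forall z, E_G G z) \/ (affine_dim (E_G G) (n - 1) /\ closure_Lambda_is_C G).
Proof.
  move=> nonab [z z_dense].
  have [f0 [c0 [Gf0 [f0_neq1 f0_c0]]]] := nonabelian_center nonab.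
  have Ec0 : E_G G c0 by apply: Gamma_E_G; exists f0.
  have direction := E_G_direction c0 Ec0.
  have [k [v [le_kn [v_indep [v_in v_span]]]]] := subspace_basis _ direction.
  have E_G_eqv L : linear_form L -> (forall j, (j < k)%coq_nat -> L (v j) = C0) ->
      equivariant_at G L c0 z.
  { move=> L_lin Lv; apply: (equivariant_of_vanishing G_subgroup) => // x /v_span [c ->].
    exact: linear_form_vlin L_lin Lv. }
  have L_neq0 L K y : linear_form L -> bounded_form L K -> L y = C1 ->
      (forall j, (j < k)%coq_nat -> L (v j) = C0) -> L (vsub z c0) <> C0.
  { move=> L_lin L_bdd Ly Lv.
    exact: equivariant_form_neq0 L_lin L_bdd Ly (E_G_eqv L L_lin Lv) z_dense. }
  case: (Nat.eq_dec k n) => [eq_kn | ne_kn].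
  { left => w; rewrite -(vadd_vsub c0 w); subst k.
    have [c ->] := lin_indep_full _ v_indep (vsub w c0).
    exact: linear_subspace_vlin direction v_in. }
  have [L [K [L_lin [L_bdd [Lv [y Ly]]]]]] := annihilating_form _ v (ltac:(lia) : (k < n)%coq_nat).
  right; split; last first.
  { exact: Lambda_dense_of_equivariant_form L_lin L_bdd Ly (E_G_eqv L L_lin Lv) z_dense
      (L_neq0 L K y L_lin L_bdd Ly Lv). }
  case: (Nat.eq_dec k (n - 1)) => [<- | ne_kn1].
  { exists c0, v; split => // w; split => [Ew | [c ->]]; last exact: linear_subspace_vlin direction v_in.
    have [c w_eq] : exists c, vsub w c0 = vlin k c v by apply: v_span; rewrite vadd_vsub.
    by exists c; rewrite -w_eq vadd_vsub. }
  pose v' j := if Nat.eqb j k then vsub z c0 else v j.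
  have [L' [K' [L'_lin [L'_bdd [L'v' [y' L'y']]]]]] :=
    annihilating_form _ v' (ltac:(lia) : (S k < n)%coq_nat).
  have L'v j : (j < k)%coq_nat -> L' (v j) = C0.
  { move=> ltjk; have := L'v' j (ltac:(lia)); rewrite /v'.
    by case: Nat.eqb_spec => [eq_jk _ | //]; lia. }
  exfalso; apply: (L_neq0 L' K' y' L'_lin L'_bdd L'y' L'v).
  by have := L'v' k (ltac:(lia)); rewrite /v' Nat.eqb_refl.
Qed.

Lemma dense_off_E_G_of_hyperplane : nonabelian G -> affine_dim (E_G G) (n - 1) ->
  closure_Lambda_is_C G -> forall z, ~ E_G G z -> dense_orbit G z.
Proof.
  move=> nonab [p [v [v_indep E_eq]]] Lambda_dense z z_off.
  have Ep : E_G G p by apply/E_eq; exists (fun _ => C0); rewrite vlin0; vec_parts; ring.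
  apply: (dense_orbit_of_decomposition G_subgroup z p) => // w.
  have u_notin : ~ exists c, vsub z p = vlin (n - 1) c v.
  { by move=> [c u_eq]; apply: z_off; apply/E_eq; exists c; rewrite -u_eq vadd_vsub. }
  have [c [mu w_eq]] := lin_indep_extend_span v (vsub z p) v_indep u_notin (vsub w p).
  exists (vlin (n - 1) c v), mu; split; first by apply/E_eq; exists c.
  by rewrite -(vadd_vsub p w) w_eq; vec_parts; ring.
Qed.
End DenseOrbits.

Theorem corollary1p4 (n : nat) (G : aff n -> Prop) :
  is_subgroup G -> nonabelian G -> ~ Lambda_subset_R G -> ~ subset_SR G ->
  (has_dense_orbit G <-> (forall z : vec n, ~ E_G G z -> dense_orbit G z)) /\
  ((forall z : vec n, ~ E_G G z -> dense_orbit G z) <->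
     ((forall z : vec n, E_G G z) \/
      (affine_dim (E_G G) (n - 1) /\ closure_Lambda_is_C G))).
Proof.
  move=> G_subgroup nonab not_real not_SR.
  have one_three := dense_orbit_E_G_codim_le1 G_subgroup nonab.
  have two_one := has_dense_orbit_of_dense_off_E_G G_subgroup nonab not_real not_SR.
  have three_two : (forall z, E_G G z) \/ (affine_dim (E_G G) (n - 1) /\ closure_Lambda_is_C G) ->
      forall z, ~ E_G G z -> dense_orbit G z.
  { case=> [E_full z /(_ (E_full z)) [] | [dim Lambda_dense]].
    exact: dense_off_E_G_of_hyperplane. }
  tauto.
Qed.
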